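(* Let $N\ge 4$, $1\le m\le N$ and $1\le k\le N$ be integers. Consider a uniformly random ranking of $N$ items exactly $m$ of which are relevant, i.e. the set of positions of the relevant items is a uniformly random $m$-element subset of $\{1,\dots,N\}$. For $j=1,\dots,N$ let $I_j\in\{0,1\}$ equal $1$ iff the item at position $j$ is relevant, let $P@i=\frac1i\sum_{j=1}^i I_j$, and let $AP@k=\frac{1}{\min(m,k)}\sum_{i=1}^k P@i\cdot I_i$. Then $$\operatorname{Var}(AP@k)=\frac{1}{M^2}\frac{m}{N}\Big[k\big(C+2(E-F)+(k-1)G\big)+H_k\big(B-2(E-kF)\big)+H_k^2 D+H_k^{(2)}(A-D)\Big],$$ where $M=\min(m,k)$, $H_k=\sum_{i=1}^k\frac1i$, $H_k^{(2)}=\sum_{i=1}^k\frac1{i^2}$, and \begin{align*} A&=1-\frac{m}{N}-\frac{m-1}{N-1}\left(3-2\frac{m-2}{N-2}-\frac{m}{N}\left(2-\frac{m-1}{N-1}\right)\right),\\ B&=\frac{m-1}{N-1}\left(3\left(1-\frac{m-2}{N-2}\right)-2\frac{m}{N}\left(1-\frac{m-1}{N-1}\right)\right),\\ C&=\frac{m-1}{N-1}\left(\frac{m-2}{N-2}-\frac{m(m-1)}{N(N-1)}\right),\\ D&=\frac{m-1}{N-1}\left(2-5\frac{m-2}{N-2}+3\frac{(m-2)(m-3)}{(N-2)(N-3)}\right)-\frac{m}{N}\left(1-\frac{m-1}{N-1}\right)^2,\\ E&=\frac{m-1}{N-1}\left(3\frac{m-2}{N-2}\left(1-\frac{m-3}{N-3}\right)-\frac{m}{N}\left(1-\frac{m-1}{N-1}\right)\right),\\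 F&=\frac{m-1}{N-1}\left(\frac{m-2}{N-2}\left(1-\frac{m-3}{N-3}\right)-\frac{m}{N}\left(1-\frac{m-1}{N-1}\right)\right),\\ G&=\frac{m-1}{N-1}\left(\frac{(m-2)(m-3)}{(N-2)(N-3)}-\frac{m}{N}\frac{m-1}{N-1}\right). \end{align*}
   Context: This is the offline evaluation model (sampling of the $m$ relevant positions among $N$ without replacement, with equal probabilities). *)

From HB Require Import structures.
From mathcomp Require Import all_boot all_order all_algebra.
Set Implicit Arguments. Unset Strict Implicit. Unset Printing Implicit Defensive.
Import Order.TTheory GRing.Theory Num.Theory.
Local Open Scope ring_scope.

Section Offline.
Variables (R : realFieldType) (N m : nat).

(* Sample space: the set S of positions (ordinal i <-> position i+1) of the
   relevant items, uniformly distributed over all m-element subsets. *)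
Definition outcomes : {set {set 'I_N}} := [set S : {set 'I_N} | #|S| == m].

Definition Ind (S : {set 'I_N}) (j : nat) : R :=
  if [exists i : 'I_N, (i.+1 == j) && (i \in S)] then 1 else 0.

Definition Pat (S : {set 'I_N}) (i : nat) : R :=
  (i%:R)^-1 * \sum_(1 <= j < i.+1) Ind S j.

Definition APat (k : nat) (S : {set 'I_N}) : R :=
  ((minn m k)%:R)^-1 * \sum_(1 <= i < k.+1) Pat S i * Ind S i.

Definition Expect (X : {set 'I_N} -> R) : R :=
  (#|outcomes|%:R)^-1 * \sum_(S in outcomes) X S.

Definition Variance (X : {set 'I_N} -> R) : R :=
  Expect (fun S => (X S - Expect X) ^+ 2).

End Offline.

Definition harm (R : realFieldType) (k : nat) : R := \sum_(1 <= i < k.+1) (i%:R)^-1.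
Definition harm2 (R : realFieldType) (k : nat) : R := \sum_(1 <= i < k.+1) (i%:R ^+ 2)^-1.

(* AP@k is a quadratic form in the indicators I_j, so its first two moments
   only involve the mixed moments E[I_j1 ... I_jt] of the uniform draw.  Such a
   moment is m^_t / N^_t, t being the number of distinct positions among
   j1, ..., jt, since C(N - t, m - t) of the m-sets contain a given t-set.
   Summing these weights over the index ranges of AP@k and (AP@k)^2, and
   splitting each inner range according to whether the new index repeats an
   earlier one, gives closed forms in k, H_k and H_k^(2); the variance formula
   is then a rational identity in N and m. *)

From HB Require Import structures.
From mathcomp Require Import all_boot all_order all_algebra.
From mathcomp Require Import zify ring lra.
Import Order.TTheory GRing.Theory Num.Theory.
Local Open Scope ring_scope.

Definition ndistinct {T : eqType} (s : seq T) : nat := size (undup s).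

Lemma eq_ndistinct {T : eqType} (s1 s2 : seq T) : s1 =i s2 -> ndistinct s1 = ndistinct s2.
Proof.
move=> eq_s; apply/perm_size/uniq_perm; rewrite ?undup_uniq // => x.
by rewrite !mem_undup.
Qed.

Lemma ndistinct_cons {T : eqType} (x : T) s :
  ndistinct (x :: s) = if x \in s then ndistinct s else (ndistinct s).+1.
Proof. by rewrite /ndistinct /=; case: ifP. Qed.

Lemma count_mem_iota (s : seq nat) n : all (fun x => (x < n)%N) s ->
  count (mem s) (iota 0 n) = ndistinct s.
Proof.
move=> s_lt_n; rewrite -size_filter /ndistinct.
apply/perm_size/uniq_perm; rewrite ?filter_uniq ?iota_uniq ?undup_uniq // => x.
rewrite mem_filter mem_undup mem_iota add0n leq0n /=.
by case: (boolP (x \in s)) => // /(allP s_lt_n) ->.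
Qed.

Section HarmonicSums.
Variable R : realFieldType.

Lemma harm0 : harm R 0 = 0.
Proof. by rewrite /harm big_geq. Qed.

Lemma harmS k : harm R k.+1 = harm R k + (k.+1%:R)^-1.
Proof. by rewrite /harm big_nat_recr. Qed.

Lemma harm20 : harm2 R 0 = 0.
Proof. by rewrite /harm2 big_geq. Qed.

Lemma harm2S k : harm2 R k.+1 = harm2 R k + (k.+1%:R ^+ 2)^-1.
Proof. by rewrite /harm2 big_nat_recr. Qed.

Lemma sum_ndistinct_cons (h : nat -> R) n (s : seq nat) :
  all (fun x => (x < n)%N) s ->
  \sum_(0 <= j < n) h (ndistinct (j :: s)) =
    (ndistinct s)%:R * h (ndistinct s) + (n%:R - (ndistinct s)%:R) * h (ndistinct s).+1.
Proof.
move=> s_lt_n; set u := ndistinct s.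
have count_s : count (mem s) (index_iota 0 n) = u.
  by rewrite /index_iota subn0 count_mem_iota.
have count_notin : count (predC (mem s)) (index_iota 0 n) = (n - u)%N.
  have := count_predC (mem s) (index_iota 0 n); rewrite count_s size_iota; lia.
rewrite (bigID (mem s)) /=.
rewrite [X in X + _](eq_bigr (fun=> h u)) => [|j js]; last by rewrite ndistinct_cons js.
rewrite [X in _ + X](eq_bigr (fun=> h u.+1)) => [|j js]; last first.
  by rewrite ndistinct_cons (negbTE js).
have u_le_n : (u <= n)%N.
  by rewrite -count_s (leq_trans (count_size _ _)) // size_iota subn0.
rewrite !big_const_seq !iter_addr_0 -natrB // !mulr_natl.
by congr (_ *+ _ + _ *+ _).
Qed.

Lemma sum_inv_affine k (a b : R) :
  \sum_(0 <= i < k) (i.+1%:R)^-1 * (a + i%:R * b) = (a - b) * harm R k + k%:R * b.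
Proof.
elim: k => [|k IH]; first by rewrite big_geq // harm0; ring.
have k1_neq0 : (k.+1%:R : R) != 0 by rewrite pnatr_eq0.
rewrite big_nat_recr //= IH harmS.
move: k1_neq0; rewrite -addn1 natrD => k1_neq0.
by field.
Qed.

Variable w : nat -> R.

Lemma sum_pair_weights k :
  \sum_(0 <= i < k) (i.+1%:R)^-1 * \sum_(0 <= j < i.+1) w (ndistinct [:: j; i])
  = harm R k * w 1 + (k%:R - harm R k) * w 2.
Proof.
under eq_bigr => i _.
  rewrite sum_ndistinct_cons /= ?ltnSn // /ndistinct /= mul1r.
  rewrite [X in X - 1]mulrSr addrK.
  over.
by rewrite sum_inv_affine; ring.
Qed.

(* With [w := incl_prob], this is E[(sum_(j <= i) I_j I_i) (sum_(j' <= i') I_j' I_i')]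
   up to the shift of all indices by one. *)
Definition cross_weight i i' :=
  \sum_(0 <= j < i.+1) \sum_(0 <= j' < i'.+1) w (ndistinct [:: j; i; j'; i']).

Lemma cross_weightC i i' : cross_weight i i' = cross_weight i' i.
Proof.
rewrite /cross_weight exchange_big_nat; apply: eq_bigr => j' _; apply: eq_bigr => j _.
by congr (w _); apply: eq_ndistinct => x; rewrite !inE; do 2!bool_congr.
Qed.

Lemma cross_weight_inner j i i' : (j <= i <= i')%N ->
  \sum_(0 <= j' < i'.+1) w (ndistinct [:: j; i; j'; i'])
  = (ndistinct [:: j; i; i'])%:R * w (ndistinct [:: j; i; i'])
    + (i'.+1%:R - (ndistinct [:: j; i; i'])%:R) * w (ndistinct [:: j; i; i']).+1.
Proof.
case/andP=> le_ji le_ii'.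
rewrite -sum_ndistinct_cons /= ?ltnS ?le_ii' ?(leq_trans le_ji le_ii') ?leqnn //.
apply: eq_bigr => j' _; congr (w _); apply: eq_ndistinct => x; rewrite !inE.
by do 2!bool_congr.
Qed.

Lemma cross_weight_lt i i' : (i < i')%N ->
  cross_weight i i' = 2 * w 2 + (i'.+1%:R - 2) * w 3 + i%:R * (3 * w 3 + (i'.+1%:R - 3) * w 4).
Proof.
move=> lt_ii'; rewrite /cross_weight big_nat_recr //=.
rewrite cross_weight_inner; last by rewrite leqnn ltnW.
rewrite (eq_big_nat _ _ (F2 := fun=> 3 * w 3 + (i'.+1%:R - 3) * w 4)) => [|j /andP[_ lt_ji]].
  rewrite sumr_const_nat subn0 -mulr_natl /ndistinct /= !inE eqxx (ltn_eqF lt_ii') /=.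
  ring.
have lt_ji' := ltn_trans lt_ji lt_ii'.
rewrite cross_weight_inner; last by rewrite (ltnW lt_ji) (ltnW lt_ii').
by rewrite /ndistinct /= !inE (ltn_eqF lt_ji) (ltn_eqF lt_ji') (ltn_eqF lt_ii').
Qed.

Lemma cross_weight_diag i :
  cross_weight i i = w 1 + 3 * i%:R * w 2 + i%:R * (i%:R - 1) * w 3.
Proof.
rewrite /cross_weight big_nat_recr //= cross_weight_inner; last by rewrite leqnn.
rewrite (eq_big_nat _ _ (F2 := fun=> 2 * w 2 + (i.+1%:R - 2) * w 3)) => [|j /andP[_ lt_ji]].
  rewrite sumr_const_nat subn0 -mulr_natl /ndistinct /= !inE eqxx /=.
  rewrite mulrSr; ring.
rewrite cross_weight_inner; last by rewrite (ltnW lt_ji) leqnn.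
by rewrite /ndistinct /= !inE (ltn_eqF lt_ji) eqxx.
Qed.

Lemma sum_cross_weights k :
  \sum_(0 <= i < k) \sum_(0 <= i' < k) (i.+1%:R)^-1 * (i'.+1%:R)^-1 * cross_weight i i'
  = harm2 R k * w 1
    + (3 * harm R k + 2 * harm R k ^+ 2 - 5 * harm2 R k) * w 2
    + (5 * k%:R - 9 * harm R k + 7 * harm2 R k - 5 * harm R k ^+ 2
       + 2 * k%:R * harm R k) * w 3
    + (k%:R ^+ 2 - 5 * k%:R + 6 * harm R k - 2 * k%:R * harm R k
       + 3 * harm R k ^+ 2 - 3 * harm2 R k) * w 4.
Proof.
elim: k => [|k IH]; first by rewrite !big_geq // harm0 harm20; ring.
set a := 2 * w 2 + (k.+1%:R - 2) * w 3.
set b := 3 * w 3 + (k.+1%:R - 3) * w 4.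
have last_column : \sum_(0 <= i < k) (i.+1%:R)^-1 * (k.+1%:R)^-1 * cross_weight i k
    = (k.+1%:R)^-1 * ((a - b) * harm R k + k%:R * b).
  rewrite -sum_inv_affine mulr_sumr; apply: eq_big_nat => i /andP[_ lt_ik].
  by rewrite cross_weight_lt // -/a -/b; ring.
have last_row : \sum_(0 <= i' < k) (k.+1%:R)^-1 * (i'.+1%:R)^-1 * cross_weight k i'
    = (k.+1%:R)^-1 * ((a - b) * harm R k + k%:R * b).
  by rewrite -last_column; apply: eq_bigr => i _; rewrite cross_weightC; ring.
rewrite big_nat_recr //=.
under eq_bigr do rewrite big_nat_recr //=.
rewrite big_split /= IH big_nat_recr //= last_column last_row cross_weight_diag.
rewrite harmS harm2S /a /b.
have k1_neq0 : (k.+1%:R : R) != 0 by rewrite pnatr_eq0.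
move: k1_neq0; rewrite -addn1 natrD => k1_neq0.
by field.
Qed.

End HarmonicSums.

Lemma natr_ffactS (R : pzRingType) n t :
  ((n ^_ t.+1)%:R : R) = (n ^_ t)%:R * (n%:R - t%:R).
Proof.
rewrite ffactnSr natrM; have [le_tn | lt_nt] := leqP t n; first by rewrite natrB.
by rewrite ffact_small // !mul0r.
Qed.

Section UniformDraws.
Variables (R : realFieldType) (N m : nat).
Hypothesis le_mN : (m <= N)%N.

Definition incl_prob (t : nat) : R := (m ^_ t)%:R / (N ^_ t)%:R.

Lemma card_outcomes : #|outcomes N m| = 'C(N, m).
Proof. by rewrite card_draws card_ord. Qed.

Lemma bin_sub_ffact t : (t <= N)%N ->
  ('C(N - t, N - m) * N ^_ t = 'C(N, m) * m ^_ t)%N.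
Proof.
move=> le_tN; have [le_tm | lt_mt] := leqP t m; last first.
  by rewrite (ffact_small lt_mt) bin_small ?muln0 ?mul0n //; lia.
apply/eqP; rewrite -(@eqn_pmul2r ((m - t)`! * (N - m)`!)) ?muln_gt0 ?fact_gt0 //.
apply/eqP; transitivity N`!.
  have := bin_fact (leq_sub2l N le_tm); rewrite (_ : (N - t - (N - m) = m - t)%N); last by lia.
  by rewrite -(ffact_fact le_tN) => <-; ring.
by rewrite -(bin_fact le_mN) -(ffact_fact le_tm); ring.
Qed.

Lemma card_supersets (T : {set 'I_N}) :
  #|[set S in outcomes N m | T \subset S]| = 'C(N - #|T|, N - m).
Proof.
have -> : (N - #|T| = #|~: T|)%N by have := cardsC T; rewrite card_ord; lia.
rewrite -cards_draws -(card_preimset _ (@setC_inj _)); apply: eq_card => S.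
rewrite !inE setCS andbC; congr (_ && _).
by apply/eqP/eqP; have := cardsC S; rewrite card_ord; lia.
Qed.

Lemma card_outcomes_neq0 : (#|outcomes N m|%:R : R) != 0.
Proof. by rewrite card_outcomes pnatr_eq0 -lt0n bin_gt0. Qed.

Lemma eq_Expect {X Y : {set 'I_N} -> R} : X =1 Y -> Expect m X = Expect m Y.
Proof. by move=> eq_XY; rewrite /Expect (eq_bigr _ (fun S _ => eq_XY S)). Qed.

Lemma ExpectZl c (X : {set 'I_N} -> R) : Expect m (fun S => c * X S) = c * Expect m X.
Proof. by rewrite /Expect -mulr_sumr mulrCA. Qed.

Lemma Expect_sum (I : Type) (r : seq I) (X : I -> {set 'I_N} -> R) :
  Expect m (fun S => \sum_(i <- r) X i S) = \sum_(i <- r) Expect m (X i).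
Proof. by rewrite /Expect exchange_big mulr_sumr. Qed.

Lemma VarianceE (X : {set 'I_N} -> R) :
  Variance m X = Expect m (fun S => X S ^+ 2) - Expect m X ^+ 2.
Proof.
rewrite /Variance /Expect; set c := #|outcomes N m|%:R; set sX := \sum_(S in _) X S.
have c_neq0 : c != 0 := card_outcomes_neq0.
rewrite (eq_bigr (fun S => X S ^+ 2 - 2 * (c^-1 * sX) * X S + (c^-1 * sX) ^+ 2));
  last by move=> S _; ring.
rewrite big_split sumrB /= -mulr_sumr sumr_const -/sX -mulr_natr -/c.
by field.
Qed.

Lemma Expect_subset (T : {set 'I_N}) :
  Expect m (fun S => (T \subset S)%:R) = incl_prob #|T|.
Proof.
have le_TN : (#|T| <= N)%N by rewrite -[N in (_ <= N)%N]card_ord max_card.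
have count_eq : #|[set S in outcomes N m | T \subset S]|%:R * (N ^_ #|T|)%:R
    = #|outcomes N m|%:R * (m ^_ #|T|)%:R :> R.
  by rewrite -!natrM card_supersets card_outcomes bin_sub_ffact.
have sum_indicator : \sum_(S in outcomes N m) ((T \subset S)%:R : R)
    = #|[set S in outcomes N m | T \subset S]|%:R.
  rewrite -sum1_card natr_sum big_mkcond [RHS]big_mkcond /=.
  by apply: eq_bigr => S _; rewrite !inE; case: (#|S| == m); case: (T \subset S).
have Nt_neq0 : ((N ^_ #|T|)%:R : R) != 0 by rewrite pnatr_eq0 -lt0n ffact_gt0.
rewrite /Expect /incl_prob sum_indicator.
rewrite -(mulfK Nt_neq0 #|[set S in outcomes N m | T \subset S]|%:R) count_eq.
by rewrite mulrA mulKf ?card_outcomes_neq0.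
Qed.

Lemma Ind_succ S (i : 'I_N) : Ind R S i.+1 = (i \in S)%:R.
Proof.
rewrite /Ind; case: existsP => [[j /andP[/eqP/succn_inj/val_inj -> ->]] // | no_j].
by case: (boolP (i \in S)) => // iS; case: no_j; exists i; rewrite eqxx iS.
Qed.

Lemma prod_Ind S (s : seq nat) : all (fun x => (x < N)%N) s ->
  \prod_(x <- s) Ind R S x.+1 = ([set i : 'I_N | val i \in s] \subset S)%:R.
Proof.
elim: s => [_ | x s IH /andP[x_lt_N s_lt_N]].
  have -> : [set i : 'I_N | val i \in [::]] = set0 by apply/setP => i; rewrite !inE.
  by rewrite big_nil sub0set.
have -> : [set i : 'I_N | val i \in x :: s] = Ordinal x_lt_N |: [set i | val i \in s].
  by apply/setP => i; rewrite !inE -val_eqE.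
by rewrite big_cons IH // (Ind_succ S (Ordinal x_lt_N)) -natrM mulnb subUset sub1set.
Qed.

Lemma card_positions (s : seq nat) : all (fun x => (x < N)%N) s ->
  #|[set i : 'I_N | val i \in s]| = ndistinct s.
Proof.
move=> s_lt_N.
have uniq_s' : uniq (pmap insub (undup s) : seq 'I_N) := pmap_sub_uniq _ (undup_uniq s).
transitivity (size (pmap insub (undup s) : seq 'I_N)).
  by rewrite -(card_uniqP uniq_s'); apply: eq_card => i; rewrite inE mem_pmap_sub mem_undup.
rewrite size_pmap_sub /ndistinct -count_predT.
by apply: eq_in_count => x; rewrite mem_undup => /(allP s_lt_N).
Qed.

Lemma Expect_prod_Ind (s : seq nat) : all (fun x => (x < N)%N) s ->
  Expect m (fun S : {set 'I_N} => \prod_(x <- s) Ind R S x.+1) = incl_prob (ndistinct s).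
Proof.
move=> s_lt_N.
by rewrite (eq_Expect (fun S => prod_Ind S _ s_lt_N)) Expect_subset card_positions.
Qed.

Section AveragePrecision.
Variable k : nat.
Hypothesis le_kN : (k <= N)%N.

Local Notation Ind_prod S s := (\prod_(x <- s) Ind R S x.+1).

Lemma APatE (S : {set 'I_N}) : APat R m k S =
  (minn m k)%:R^-1 *
    \sum_(0 <= i < k) (i.+1%:R)^-1 * \sum_(0 <= j < i.+1) Ind_prod S [:: j; i].
Proof.
rewrite /APat big_add1 /=; congr (_ * _); apply: eq_bigr => i _.
rewrite /Pat big_add1 /= -mulrA mulr_suml mulr_sumr [RHS]mulr_sumr.
by apply: eq_bigr => j _; rewrite big_cons big_seq1.
Qed.

Lemma APat_sqrE (S : {set 'I_N}) : APat R m k S ^+ 2 =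
  (minn m k)%:R^-1 ^+ 2 * \sum_(0 <= i < k) \sum_(0 <= i' < k)
    (i.+1%:R)^-1 * (i'.+1%:R)^-1 *
    \sum_(0 <= j < i.+1) \sum_(0 <= j' < i'.+1) Ind_prod S [:: j; i; j'; i'].
Proof.
rewrite APatE expr2 mulrACA; congr (_ * _).
rewrite mulr_suml; apply: eq_bigr => i _; rewrite mulr_sumr; apply: eq_bigr => i' _.
rewrite mulrACA big_distrlr; congr (_ * _); apply: eq_bigr => j _; apply: eq_bigr => j' _.
by rewrite -[[:: j; i; j'; i']]/([:: j; i] ++ [:: j'; i']) big_cat.
Qed.

Lemma Expect_APat : Expect m (@APat R N m k) =
  (minn m k)%:R^-1 * \sum_(0 <= i < k) (i.+1%:R)^-1 *
    \sum_(0 <= j < i.+1) incl_prob (ndistinct [:: j; i]).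
Proof.
rewrite (eq_Expect APatE) ExpectZl Expect_sum; congr (_ * _).
apply: eq_big_nat => i /andP[_ lt_ik]; rewrite ExpectZl Expect_sum; congr (_ * _).
by apply: eq_big_nat => j /andP[_ lt_ji]; rewrite Expect_prod_Ind //=; lia.
Qed.

Lemma Expect_APat_sqr : Expect m (fun S : {set 'I_N} => APat R m k S ^+ 2) =
  (minn m k)%:R^-1 ^+ 2 * \sum_(0 <= i < k) \sum_(0 <= i' < k)
    (i.+1%:R)^-1 * (i'.+1%:R)^-1 * cross_weight R incl_prob i i'.
Proof.
rewrite (eq_Expect APat_sqrE) ExpectZl Expect_sum; congr (_ * _).
apply: eq_big_nat => i /andP[_ lt_ik]; rewrite Expect_sum.
apply: eq_big_nat => i' /andP[_ lt_i'k]; rewrite ExpectZl Expect_sum; congr (_ * _).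
apply: eq_big_nat => j /andP[_ lt_ji]; rewrite Expect_sum.
by apply: eq_big_nat => j' /andP[_ lt_j'i']; rewrite Expect_prod_Ind //=; lia.
Qed.

End AveragePrecision.

End UniformDraws.

Theorem theorem2 (R : realFieldType) (N m k : nat)
  (hN : (4 <= N)%N) (hm1 : (1 <= m)%N) (hmN : (m <= N)%N)
  (hk1 : (1 <= k)%N) (hkN : (k <= N)%N) :
  let n : R := N%:R in
  let r : R := m%:R in
  let M : R := (minn m k)%:R in
  let Hk : R := harm R k in
  let Hk2 : R := harm2 R k in
  let A : R := 1 - r / n - (r - 1) / (n - 1) *
      (3 - 2 * ((r - 2) / (n - 2)) - r / n * (2 - (r - 1) / (n - 1))) in
  let B : R := (r - 1) / (n - 1) *
      (3 * (1 - (r - 2) / (n - 2)) - 2 * (r / n) * (1 - (r - 1) / (n - 1))) in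
  let C : R := (r - 1) / (n - 1) *
      ((r - 2) / (n - 2) - r * (r - 1) / (n * (n - 1))) in
  let D : R := (r - 1) / (n - 1) *
      (2 - 5 * ((r - 2) / (n - 2)) + 3 * ((r - 2) * (r - 3) / ((n - 2) * (n - 3))))
      - r / n * (1 - (r - 1) / (n - 1)) ^+ 2 in
  let E : R := (r - 1) / (n - 1) *
      (3 * ((r - 2) / (n - 2)) * (1 - (r - 3) / (n - 3))
       - r / n * (1 - (r - 1) / (n - 1))) in
  let F : R := (r - 1) / (n - 1) *
      ((r - 2) / (n - 2) * (1 - (r - 3) / (n - 3))
       - r / n * (1 - (r - 1) / (n - 1))) in
  let G : R := (r - 1) / (n - 1) *
      ((r - 2) * (r - 3) / ((n - 2) * (n - 3)) - r / n * ((r - 1) / (n - 1))) in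
  @Variance R N m (@APat R N m k) =
    (M ^+ 2)^-1 * (r / n) *
      (k%:R * (C + 2 * (E - F) + (k%:R - 1) * G)
       + Hk * (B - 2 * (E - k%:R * F))
       + Hk ^+ 2 * D
       + Hk2 * (A - D)).
Proof.
move=> n r M Hk Hk2 A B C D E F G.
rewrite VarianceE // Expect_APat_sqr // Expect_APat // sum_cross_weights sum_pair_weights.
rewrite /incl_prob !natr_ffactS !ffactn0 !mul1r /M /Hk /Hk2 /A /B /C /D /E /F /G /n /r.
have n_ge4 : (4 : R) <= N%:R by rewrite (ler_nat R 4 N).
have M_ge1 : (1 : R) <= (minn m k)%:R by rewrite (ler_nat R 1) leq_min hm1 hk1.
have n_neq0 : (N%:R : R) != 0 by apply: lt0r_neq0; lra.
have n1_neq0 : (N%:R - 1 : R) != 0 by apply: lt0r_neq0; lra.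
have n2_neq0 : (N%:R - 2 : R) != 0 by apply: lt0r_neq0; lra.
have n3_neq0 : (N%:R - 3 : R) != 0 by apply: lt0r_neq0; lra.
have M_neq0 : ((minn m k)%:R : R) != 0 by apply: lt0r_neq0; lra.
by field; rewrite n_neq0 n1_neq0 n2_neq0 n3_neq0 M_neq0.
Qed.
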